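(* Fix an instance of MCND and a partial aggregation $\mathcal{B}$ (see context). (i) If $(x,y,z)$ is a feasible solution of the LP relaxation of the PAe formulation built on $\mathcal{B}$, then $(x,y)$ is a feasible solution of the LP relaxation of the PAi formulation built on the same $\mathcal{B}$ (with the same objective value). (ii) The converse fails in general: there exist an instance and a partial aggregation $\mathcal{B}$ for which the LP relaxation of PAi has a feasible solution $(x,y)$ such that there is no $z$ making $(x,y,z)$ feasible for the LP relaxation of PAe. (That is, PAe is stronger than PAi.)
   Context: An instance of MCND consists of a directed graph $G=(\mathcal{N},\mathcal{A})$, a finite set $\mathcal{K}$ of commodities, each $k\in\mathcal{K}$ having an origin $o^k\in\mathcal{N}$, a destination $s^k\in\mathcal{N}$ and a demand $d^k\ge 0$, and for each arc $(i,j)\in\mathcal{A}$ a capacity $u_{ij}$, a per-unit flow cost $c_{ij}$ and a fixed cost $f_{ij}$, all nonnegative. Let $o_i^k=1$ if $i=o^k$ and $0$ otherwise, $s_i^k=1$ if $i=s^k$ and $0$ otherwise, $\mathcal{N}_i^+=\{j:(i,j)\in\mathcal{A}\}$, $\mathcal{N}_i^-=\{j:(j,i)\in\mathcal{A}\}$. Dispersion: a nonempty set $\mathcal{K}_b\subseteq\mathcal{K}$ of commodities sharing a common origin, together with, for every arc $(i,j)\in\mathcal{A}$, a partition of $\mathcal{K}_b$ into $\mathcal{K}_b^{ij}$ (aggregated on $(i,j)$) and $\mathcal{D}_b^{ij}$ (disaggregated on $(i,j)$); either part may be empty. Let $\mathcal{G}_b^{ij}$ be the family consisting of the set $\mathcal{K}_b^{ij}$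 (if nonempty) together with the singletons $\{k\}$, $k\in\mathcal{D}_b^{ij}$. A partial aggregation is a set $\mathcal{B}$ of dispersions such that every $k\in\mathcal{K}$ lies in $\mathcal{K}_b$ for exactly one $b\in\mathcal{B}$. LP relaxation of PA (for $\mathcal{B}$): variables $x_{ij}^D\ge0$ for $(i,j)\in\mathcal{A}$, $b\in\mathcal{B}$, $D\in\mathcal{G}_b^{ij}$ (since the $\mathcal{K}_b$ are disjoint, $D$ determines $b$), and $0\le y_{ij}\le1$; minimize $\sum_{(i,j)}c_{ij}\sum_{b}\sum_{D\in\mathcal{G}_b^{ij}}x_{ij}^D+\sum_{(i,j)}f_{ij}y_{ij}$ subject to: for all $b\in\mathcal{B}$, $i\in\mathcal{N}$: $\sum_{j\in\mathcal{N}_i^+}\sum_{D\in\mathcal{G}_b^{ij}}x_{ij}^D-\sum_{j\in\mathcal{N}_i^-}\sum_{D\in\mathcal{G}_b^{ji}}x_{ji}^D=\sum_{k\in\mathcal{K}_b}(o_i^k-s_i^k)d^k$; for all $(i,j)$: $\sum_b\sum_{D\in\mathcal{G}_b^{ij}}x_{ij}^D\le u_{ij}y_{ij}$; for all $(i,j),b,D\in\mathcal{G}_b^{ij}$: $x_{ij}^D\le(\sum_{k\in D}d^k)y_{ij}$. LP relaxation of PAi: the PA LP plus, for all $b\in\mathcal{B}$, $k\in\mathcal{K}_b$, $i\in\mathcal{N}$: $\sum_{j\in\mathcal{N}_i^+}\sum_{D\in\mathcal{G}_b^{ij}:k\in D}x_{ij}^D-\sum_{j\in\mathcal{N}_i^-}\sum_{D\in\mathcal{G}_b^{ji}:D=\{k\}}x_{ji}^D\ge(o_i^k-s_i^k)d^k$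 and $\sum_{j\in\mathcal{N}_i^+}\sum_{D\in\mathcal{G}_b^{ij}:D=\{k\}}x_{ij}^D-\sum_{j\in\mathcal{N}_i^-}\sum_{D\in\mathcal{G}_b^{ji}:k\in D}x_{ji}^D\le(o_i^k-s_i^k)d^k$. LP relaxation of PAe: the PA LP plus the following. For $b\in\mathcal{B}$, $i\in\mathcal{N}$ let $\mathcal{L}_b^i=\{k\in\mathcal{K}_b:k\in\mathcal{D}_b^{ji}\text{ for some }j\in\mathcal{N}_i^-\text{ or }k\in\mathcal{D}_b^{ij}\text{ for some }j\in\mathcal{N}_i^+\}$; $\mathcal{M}_b^i=\{\{k\}:k\in\mathcal{L}_b^i\}\cup\{\mathcal{K}_b\setminus\mathcal{L}_b^i\}$ (the last set only if nonempty); $\check{\mathcal{T}}_b^i$ = the set of distinct nonempty sets among $\{\mathcal{K}_b^{ji}:j\in\mathcal{N}_i^-\}$; $\hat{\mathcal{T}}_b^i$ = the set of distinct nonempty sets among $\{\mathcal{K}_b^{ij}:j\in\mathcal{N}_i^+\}$. For every $(b,i)$ with $\mathcal{L}_b^i\neq\emptyset$ add variables $z_{CD}^{ib}\ge0$ for $C\in\check{\mathcal{T}}_b^i$, $D\in\mathcal{M}_b^i$ with $C\cap D\ne\emptyset$, and $z_{DC}^{ib}\ge0$ for $D\in\mathcal{M}_b^i$, $C\in\hat{\mathcal{T}}_b^i$ with $C\cap D\neq\emptyset$ (zero cost), and constraints: for each $D\in\mathcal{M}_b^i$: $\sum_{j\in\mathcal{N}_i^+:\,D=\{k\},k\in\mathcal{D}_b^{ij}}x_{ij}^{D}-\sum_{j\in\mathcal{N}_i^-:\,D=\{k\},k\in\mathcal{D}_b^{ji}}x_{ji}^{D}+\sum_{C\in\hat{\mathcal{T}}_b^i:C\cap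 D\neq\emptyset}z_{DC}^{ib}-\sum_{C\in\check{\mathcal{T}}_b^i:C\cap D\ne\emptyset}z_{CD}^{ib}=\sum_{k\in D}(o_i^k-s_i^k)d^k$; for each $C\in\check{\mathcal{T}}_b^i$: $\sum_{D\in\mathcal{M}_b^i:C\cap D\ne\emptyset}z_{CD}^{ib}-\sum_{j\in\mathcal{N}_i^-:\mathcal{K}_b^{ji}=C}x_{ji}^C=0$; for each $C\in\hat{\mathcal{T}}_b^i$: $\sum_{j\in\mathcal{N}_i^+:\mathcal{K}_b^{ij}=C}x_{ij}^C-\sum_{D\in\mathcal{M}_b^i:C\cap D\neq\emptyset}z_{DC}^{ib}=0$. The objective is that of PA. *)

From HB Require Import structures.
From mathcomp Require Import all_boot all_order all_algebra.
From mathcomp Require Import reals.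
Set Implicit Arguments. Unset Strict Implicit. Unset Printing Implicit Defensive.
Import Order.TTheory GRing.Theory Num.Theory.
Local Open Scope ring_scope.

(* An MCND instance: directed graph (node, arc) without parallel arcs
   (arcs are pairs (i,j) with arc i j), commodities with origin, destination,
   nonnegative demand; nonnegative capacity, unit flow cost and fixed cost on arcs. *)
Record mcnd (R : numDomainType) := Mcnd {
  node : finType;
  comm : finType;
  arc : rel node;
  orig : comm -> node;
  dest : comm -> node;
  dem : comm -> R;
  cap : node -> node -> R;
  ccost : node -> node -> R;
  fcost : node -> node -> R;
  dem_ge0 : forall k, 0 <= dem k;
  cap_ge0 : forall i j, arc i j -> 0 <= cap i j;
  ccost_ge0 : forall i j, arc i j -> 0 <= ccost i j;
  fcost_ge0 : forall i j, arc i j -> 0 <= fcost i j }.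

(* A partial aggregation: a family of dispersions indexed by bidx.
   Kb b = K_b; Dis b i j = D_b^{ij} (disaggregated on (i,j));
   the aggregated part is K_b^{ij} = Kb b :\: Dis b i j. *)
Record partial_aggregation (R : numDomainType) (I : mcnd R) := PAgg {
  bidx : finType;
  Kb : bidx -> {set comm I};
  Dis : bidx -> node I -> node I -> {set comm I};
  Kb_nonempty : forall b, Kb b != set0;
  Kb_common_origin : forall b k k', k \in Kb b -> k' \in Kb b -> orig k = orig k';
  Dis_sub : forall b i j, Dis b i j \subset Kb b;
  Kb_partition : forall k, exists! b, k \in Kb b }.

Section Formulations.
Variables (R : numDomainType) (I : mcnd R) (B : partial_aggregation I).

Local Notation N := (node I).
Local Notation K := (comm I).

Definition Kagg (b : bidx B) (i j : N) : {set K} := Kb b :\: Dis b i j.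

Definition Gfam (b : bidx B) (i j : N) : {set {set K}} :=
  (if Kagg b i j != set0 then [set Kagg b i j] else set0)
  :|: [set [set k] | k in Dis b i j].

Definition os (i : N) (k : K) : R :=
  (orig k == i)%:R - (dest k == i)%:R.

(* Variables: x i j D = x_{ij}^D (meaningful for arc i j and D in Gfam b i j),
   y i j = y_{ij}. *)
Definition PA_obj (x : N -> N -> {set K} -> R) (y : N -> N -> R) : R :=
  \sum_(i : N) \sum_(j : N | arc i j)
     (ccost i j * \sum_(b : bidx B) \sum_(D in Gfam b i j) x i j D)
  + \sum_(i : N) \sum_(j : N | arc i j) fcost i j * y i j.

Definition PA_feas (x : N -> N -> {set K} -> R) (y : N -> N -> R) : Prop :=
  (forall i j, arc i j -> forall b, forall D, D \in Gfam b i j -> 0 <= x i j D)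
  /\ (forall i j, arc i j -> 0 <= y i j /\ y i j <= 1)
  /\ (forall b i,
        \sum_(j : N | arc i j) \sum_(D in Gfam b i j) x i j D
        - \sum_(j : N | arc j i) \sum_(D in Gfam b j i) x j i D
        = \sum_(k in Kb b) os i k * dem k)
  /\ (forall i j, arc i j ->
        \sum_(b : bidx B) \sum_(D in Gfam b i j) x i j D <= cap i j * y i j)
  /\ (forall i j, arc i j -> forall b, forall D, D \in Gfam b i j ->
        x i j D <= (\sum_(k in D) dem k) * y i j).

Definition PAi_feas (x : N -> N -> {set K} -> R) (y : N -> N -> R) : Prop :=
  PA_feas x y
  /\ (forall b, forall k, k \in Kb b -> forall i,
        \sum_(j : N | arc i j) \sum_(D in Gfam b i j | k \in D) x i j D
        - \sum_(j : N | arc j i) \sum_(D in Gfam b j i | D == [set k]) x j i D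
        >= os i k * dem k)
  /\ (forall b, forall k, k \in Kb b -> forall i,
        \sum_(j : N | arc i j) \sum_(D in Gfam b i j | D == [set k]) x i j D
        - \sum_(j : N | arc j i) \sum_(D in Gfam b j i | k \in D) x j i D
        <= os i k * dem k).

Definition Lset (b : bidx B) (i : N) : {set K} :=
  [set k in Kb b | [exists j, arc j i && (k \in Dis b j i)]
                   || [exists j, arc i j && (k \in Dis b i j)]].

Definition Mfam (b : bidx B) (i : N) : {set {set K}} :=
  [set [set k] | k in Lset b i]
  :|: (if Kb b :\: Lset b i != set0 then [set Kb b :\: Lset b i] else set0).

Definition Tin (b : bidx B) (i : N) : {set {set K}} :=
  [set Kagg b j i | j in [pred j | arc j i && (Kagg b j i != set0)]].
Definition Tout (b : bidx B) (i : N) : {set {set K}} :=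
  [set Kagg b i j | j in [pred j | arc i j && (Kagg b i j != set0)]].

(* Extra variables: zin b i C D = z_{CD}^{ib} (C in Tin, D in Mfam),
   zout b i D C = z_{DC}^{ib} (D in Mfam, C in Tout). *)
Definition PAe_feas (x : N -> N -> {set K} -> R) (y : N -> N -> R)
    (zin : bidx B -> N -> {set K} -> {set K} -> R)
    (zout : bidx B -> N -> {set K} -> {set K} -> R) : Prop :=
  PA_feas x y
  /\ (forall b i, Lset b i != set0 ->
       (forall C D, C \in Tin b i -> D \in Mfam b i -> ~~ [disjoint C & D] ->
          0 <= zin b i C D)
       /\ (forall D C, D \in Mfam b i -> C \in Tout b i -> ~~ [disjoint C & D] ->
          0 <= zout b i D C)
       /\ (forall D, D \in Mfam b i ->
            \sum_(j : N | arc i j && [exists k, (D == [set k]) && (k \in Dis b i j)])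
                x i j D
            - \sum_(j : N | arc j i && [exists k, (D == [set k]) && (k \in Dis b j i)])
                x j i D
            + \sum_(C in Tout b i | ~~ [disjoint C & D]) zout b i D C
            - \sum_(C in Tin b i | ~~ [disjoint C & D]) zin b i C D
            = \sum_(k in D) os i k * dem k)
       /\ (forall C, C \in Tin b i ->
            \sum_(D in Mfam b i | ~~ [disjoint C & D]) zin b i C D
            - \sum_(j : N | arc j i && (Kagg b j i == C)) x j i C = 0)
       /\ (forall C, C \in Tout b i ->
            \sum_(j : N | arc i j && (Kagg b i j == C)) x i j C
            - \sum_(D in Mfam b i | ~~ [disjoint C & D]) zout b i D C = 0)).

Definition PAe_obj (x : N -> N -> {set K} -> R) (y : N -> N -> R)
    (zin zout : bidx B -> N -> {set K} -> {set K} -> R) : R := PA_obj x y.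

Definition PAi_obj (x : N -> N -> {set K} -> R) (y : N -> N -> R) : R := PA_obj x y.

End Formulations.

(* Fix a dispersion b, a node i and a commodity k of b, and let M be
   the block of M_b^i that contains k ([Mblock]).  The PAe balance of M at i
   equates the supply of M with the disaggregated flow of k plus the z-flow that
   M exchanges with the aggregated arcs at i.  An aggregated arc whose set
   contains k carries at least the z-flow it exchanges with M, and one whose set
   is {k} exchanges z-flow with M only.  The commodities of b share an origin, so
   all supplies in M have the sign of the supply of k, which therefore lies
   between 0 and the supply of M; and if M is not {k}, then k is disaggregated on
   no arc at i and no aggregated set at i is {k}.  Together these give both PAi
   inequalities.  At a node where nothing is disaggregated PAe imposes nothing,
   but z equal to the aggregated flows satisfies its node constraints there,
   which then reduce to the PA balance.

   Take two nodes joined in both directions and four commodities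
   (pairs of booleans) with zero net supply, the arc leaving node u aggregating
   the two commodities whose first coordinate differs from u.  A unit circulation
   on the aggregated sets is feasible for PAi but not for PAe. *)

From Pilot Require Import Defs.
From HB Require Import structures.
From mathcomp Require Import all_boot all_order all_algebra.
From mathcomp Require Import reals.
From mathcomp Require Import lra.
(* Re-imported so that [arc] is the arc relation of [mcnd], not [path.arc]. *)
Import Pilot.Defs.
Set Implicit Arguments. Unset Strict Implicit. Unset Printing Implicit Defensive.
Import Order.TTheory GRing.Theory Num.Theory.
Local Open Scope ring_scope.

Lemma meet_set1 (T : finType) (C : {set T}) (t : T) :
  ~~ [disjoint C & [set t]] = (t \in C).
Proof. by rewrite disjoint_sym disjoints1 negbK. Qed.

Lemma meet_mem (T : finType) (A C : {set T}) (t : T) :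
  t \in A -> t \in C -> ~~ [disjoint A & C].
Proof. by move=> tA tC; apply/negP => /disjointFr/(_ tA); rewrite tC. Qed.

Lemma meet_self (T : finType) (A : {set T}) : ~~ [disjoint A & A] = (A != set0).
Proof. by rewrite -setI_eq0 setIid. Qed.

Lemma sum_same_sign_between (R : numDomainType) (T : finType) (A : {set T})
    (F : T -> R) t :
  t \in A -> {in A, forall u, 0 <= F u} \/ {in A, forall u, F u <= 0} ->
  (0 <= F t /\ F t <= \sum_(u in A) F u)
  \/ (\sum_(u in A) F u <= F t /\ F t <= 0).
Proof.
move=> tA [F_ge0|F_le0]; [left|right]; rewrite (bigD1 t) //=.
  split; first exact: F_ge0.
  by rewrite lerDl sumr_ge0 // => u /andP[uA _]; apply: F_ge0.
split; last exact: F_le0.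
by rewrite gerDl sumr_le0 // => u /andP[uA _]; apply: F_le0.
Qed.

(* In use: [dout], [aout], [sout] (resp. [din], [ain], [sin]) are the flows of k
   out of (resp. into) node i on arcs disaggregating k, on aggregated arcs
   containing k and on aggregated arcs equal to {k}; [zout], [zin] are the
   z-flows of the block of k, [S] its supply and [s] the supply of k. *)
Lemma node_balance_bounds (R : realDomainType)
    (s S dout din aout ain sout sin zout zin : R) :
  (0 <= s /\ s <= S) \/ (S <= s /\ s <= 0) ->
  dout - din + zout - zin = S ->
  S = s \/ [/\ dout = 0, din = 0, sout = 0 & sin = 0] ->
  0 <= zout -> 0 <= zin -> zout <= aout -> zin <= ain ->
  sout <= zout -> sin <= zin ->
  s <= aout + dout - (sin + din) /\ sout + dout - (ain + din) <= s.
Proof.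
move=> sS balance [eS | [d0 d0' s0 s0']] *; first by split; lra.
by case: sS => -[] *; split; lra.
Qed.

Section Aggregation.
Variables (R : numDomainType) (I : mcnd R) (B : partial_aggregation I).
Local Notation N := (node I).
Local Notation K := (comm I).

Section GfamSums.
Variables (b : bidx B) (i j : N) (F : {set K} -> R).

Lemma Kagg_Gfam : Kagg b i j != set0 -> Kagg b i j \in Gfam b i j.
Proof. by move=> ne0; rewrite /Gfam inE ne0 inE eqxx. Qed.

Lemma sum_Gfam (P : pred {set K}) :
  \sum_(D in Gfam b i j | P D) F D =
  (if (Kagg b i j != set0) && P (Kagg b i j) then F (Kagg b i j) else 0)
  + \sum_(k in Dis b i j | P [set k]) F [set k].
Proof.
rewrite /Gfam; set A := if _ then _ else _; set S := imset _ _.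
have disjAS : [disjoint A & S].
  rewrite /A; case: ifP => _; last by apply/pred0P => D; rewrite !inE.
  rewrite disjoints1; apply/imsetP => -[k kD /= eK].
  by move: (set11 k); rewrite -eK /Kagg inE kD.
rewrite big_mkcondr (eq_bigl [predU A & S]) => [|D]; last by rewrite !inE.
rewrite bigU //; congr (_ + _).
  by rewrite /A; case: ifP => _; rewrite ?big_set1 ?big_set0.
rewrite big_imset /= => [|u v _ _]; last exact: set1_inj.
by rewrite -big_mkcondr.
Qed.

Lemma sum_Gfam_all :
  \sum_(D in Gfam b i j) F D =
  (if Kagg b i j != set0 then F (Kagg b i j) else 0)
  + \sum_(k in Dis b i j) F [set k].
Proof.
rewrite (eq_bigl (fun D => (D \in Gfam b i j) && xpredT D)) => [|D]; last first.
  by rewrite andbT.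
by rewrite sum_Gfam andbT; under [in RHS]eq_bigl do rewrite -[_ \in _]andbT.
Qed.

Lemma sum_Gfam_mem k :
  \sum_(D in Gfam b i j | k \in D) F D =
  (if k \in Kagg b i j then F (Kagg b i j) else 0)
  + (if k \in Dis b i j then F [set k] else 0).
Proof.
rewrite sum_Gfam; congr (_ + _).
  by case: (boolP (k \in Kagg b i j)) => kA; rewrite ?andbT ?andbF //= ifT //;
    apply/set0Pn; exists k.
rewrite (eq_bigl (fun k' => (k' \in Dis b i j) && (k' == k))) => [|k'].
  by rewrite big_andbC big_mkcondr /= big_pred1_eq.
by rewrite inE eq_sym.
Qed.

Lemma sum_Gfam_set1 k :
  \sum_(D in Gfam b i j | D == [set k]) F D =
  (if Kagg b i j == [set k] then F (Kagg b i j) else 0)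
  + (if k \in Dis b i j then F [set k] else 0).
Proof.
rewrite sum_Gfam; congr (_ + _).
  case: (boolP (Kagg b i j == [set k])) => [/eqP ->|_]; rewrite ?andbT ?andbF //.
  by rewrite ifT //; apply/set0Pn; exists k; rewrite inE.
rewrite (eq_bigl (fun k' => (k' \in Dis b i j) && (k' == k))) => [|k'].
  by rewrite big_andbC big_mkcondr /= big_pred1_eq.
by rewrite (inj_eq set1_inj).
Qed.

End GfamSums.

Section Mblock.
Variables (b : bidx B) (i : N).
Local Notation L := (Lset b i).

Lemma Dis_sub_Lset_out j : arc i j -> Dis b i j \subset L.
Proof.
move=> aij; apply/subsetP => k kD; rewrite inE (subsetP (Dis_sub b i j)) //=.
by apply/orP; right; apply/existsP; exists j; rewrite aij kD.
Qed.

Lemma Dis_sub_Lset_in j : arc j i -> Dis b j i \subset L.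
Proof.
move=> aji; apply/subsetP => k kD; rewrite inE (subsetP (Dis_sub b j i)) //=.
by apply/orP; left; apply/existsP; exists j; rewrite aji kD.
Qed.

Definition Mblock k := if k \in L then [set k] else Kb b :\: L.

Variable k : K.
Hypothesis kb : k \in Kb b.

Lemma mem_Mblock : k \in Mblock k.
Proof. by rewrite /Mblock; case: ifP => kL; rewrite ?set11 // in_setD kL kb. Qed.

Lemma Mblock_sub : Mblock k \subset Kb b.
Proof. by rewrite /Mblock; case: ifP => _; rewrite ?sub1set ?subsetDl. Qed.

Lemma Mblock_Mfam : Mblock k \in Mfam b i.
Proof.
rewrite /Mblock /Mfam inE; case: ifP => kL; first by rewrite imset_f.
by rewrite ifT ?set11 ?orbT //; apply/set0Pn; exists k; rewrite inE kL.
Qed.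

Lemma Mfam_mem_Mblock D : D \in Mfam b i -> (k \in D) = (D == Mblock k).
Proof.
have setD_neq k' : k' \in L -> (Kb b :\: L == [set k']) = false.
  move=> k'L; apply: contraTF k'L => /eqP eK.
  by move: (set11 k'); rewrite -eK in_setD => /andP[].
rewrite /Mblock /Mfam in_setU => /orP[/imsetP[k' k'L ->]|].
  rewrite in_set1; case: ifP => kL; first by rewrite (inj_eq set1_inj) eq_sym.
  rewrite (_ : k == k' = false); last by apply: contraFF kL => /eqP ->.
  by rewrite eq_sym setD_neq.
case: ifP => _; rewrite ?in_set0 // in_set1 => /eqP ->; rewrite in_setD kb andbT.
by case: ifP => kL; rewrite ?eqxx ?setD_neq.
Qed.

Lemma meet_Mblock (ds : {set K}) : ds \subset L ->
  ~~ [disjoint Kb b :\: ds & Mblock k] = (k \in Kb b :\: ds).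
Proof.
move=> dsL; rewrite /Mblock; case: ifP => kL; first exact: meet_set1.
have kC : k \in Kb b :\: ds.
  by rewrite inE kb andbT; apply: contraFN kL; apply: (subsetP dsL).
by rewrite kC (meet_mem kC) // inE kL.
Qed.

Lemma setD_neq_set1 (ds : {set K}) :
  ds \subset L -> Mblock k != [set k] -> Kb b :\: ds != [set k].
Proof.
rewrite /Mblock => dsL; case: ifP => [_|kL]; first by rewrite eqxx.
apply: contra => /eqP eK; rewrite eqEsubset sub1set in_setD kL kb -eK.
by rewrite !andbT setDS.
Qed.

(* One side of node i: the neighbours j with [a j], their disaggregated sets
   [ds j] and flows [f j].  For the outgoing arcs [Tside] is [Tout b i], for the
   incoming arcs it is [Tin b i]. *)
Section Side.
Variables (a : pred N) (ds : N -> {set K}) (f : N -> {set K} -> R).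
Hypothesis ds_sub : forall j, a j -> ds j \subset L.
Local Notation agg j := (Kb b :\: ds j).

Definition Tside := [set agg j | j in [pred j | a j && (agg j != set0)]].

Lemma agg_Tside j : a j -> agg j != set0 -> agg j \in Tside.
Proof. by move=> aj ne0; apply/imsetP; exists j; rewrite // inE aj ne0. Qed.

Lemma meet_Tside_Mblock C : C \in Tside -> ~~ [disjoint C & Mblock k] = (k \in C).
Proof.
by case/imsetP => j; rewrite inE => /andP[aj _] ->; apply/meet_Mblock/ds_sub.
Qed.

Lemma sum_dis_Mblock :
  \sum_(j | a j && [exists k0, (Mblock k == [set k0]) && (k0 \in ds j)])
     f j (Mblock k)
  = \sum_(j | a j && (k \in ds j)) f j [set k].
Proof.
rewrite /Mblock; case: ifP => kL.
  apply: eq_bigl => j; congr (_ && _); apply/existsP/idP => [[k0]|kd].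
    by case/andP => /eqP/set1_inj ->.
  by exists k; rewrite eqxx kd.
rewrite !big_pred0 // => j; apply/negbTE/negP => /andP[aj].
  by move=> kd; move: (subsetP (ds_sub aj) k kd); rewrite kL.
case/existsP => k0 /andP[/eqP eK k0d]; move: (subsetP (ds_sub aj) k0 k0d).
by move: (set11 k0); rewrite -eK in_setD => /andP[/negbTE ->].
Qed.

Lemma Mblock_neq_set1_flows_eq0 : Mblock k != [set k] ->
  \sum_(j | a j && (k \in ds j)) f j [set k] = 0
  /\ \sum_(j | a j && (agg j == [set k])) f j (agg j) = 0.
Proof.
move=> neq; have kL : k \notin L by apply: contra neq; rewrite /Mblock => ->.
split; rewrite big_pred0 // => j; apply/negbTE/negP => /andP[aj].
  by apply/negP; apply: contra kL; apply: (subsetP (ds_sub aj)).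
by apply/negP; apply: setD_neq_set1 neq; apply: ds_sub.
Qed.

Section NoDisaggregation.
Hypothesis L0 : L = set0.

Lemma agg_Lset_eq0 j : a j -> agg j = Kb b.
Proof.
move=> aj; have /eqP -> : ds j == set0 by rewrite -subset0 -L0 ds_sub.
exact: setD0.
Qed.

Lemma Tside_Lset_eq0 C : C \in Tside -> C = Kb b.
Proof. by case/imsetP => j; rewrite inE => /andP[aj _] ->; apply: agg_Lset_eq0. Qed.

Lemma sum_Tside_flow_Lset_eq0 :
  \sum_(C in Tside | ~~ [disjoint C & Kb b]) \sum_(j | a j && (agg j == C)) f j C
  = \sum_(j | a j) f j (Kb b).
Proof.
symmetry; rewrite (partition_big (fun j => agg j)
  (fun C => (C \in Tside) && ~~ [disjoint C & Kb b])) => [|j aj] /=.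
  apply: eq_bigr => C _; apply: eq_big => // j /andP[aj /eqP <-].
  by rewrite agg_Lset_eq0.
by rewrite agg_Tside ?agg_Lset_eq0 ?Kb_nonempty //= meet_self Kb_nonempty.
Qed.

End NoDisaggregation.

Section Redistribution.
Variable z : {set K} -> {set K} -> R.
Hypothesis z_balance : forall C, C \in Tside ->
  \sum_(j | a j && (agg j == C)) f j C
  = \sum_(D in Mfam b i | ~~ [disjoint C & D]) z D C.
Hypothesis z_ge0 : forall D C,
  D \in Mfam b i -> C \in Tside -> ~~ [disjoint C & D] -> 0 <= z D C.

Local Notation Z := (\sum_(C in Tside | ~~ [disjoint C & Mblock k]) z (Mblock k) C).

Lemma z_Mblock_le_flow C : C \in Tside -> k \in C ->
  z (Mblock k) C <= \sum_(j | a j && (agg j == C)) f j C.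
Proof.
move=> CT kC; rewrite z_balance // (bigD1 (Mblock k)) /=; last first.
  by rewrite Mblock_Mfam meet_Tside_Mblock.
by rewrite lerDl sumr_ge0 // => D /andP[/andP[DM CD] _]; apply: z_ge0.
Qed.

Lemma flow_set1_eq_z_Mblock : [set k] \in Tside ->
  \sum_(j | a j && (agg j == [set k])) f j [set k] = z (Mblock k) [set k].
Proof.
move=> kT; rewrite z_balance // (eq_bigl (pred1 (Mblock k))) ?big_pred1_eq // => D /=.
rewrite disjoints1 negbK; case: (boolP (D \in Mfam b i)) => [DM|DnM] /=.
  exact: Mfam_mem_Mblock.
by apply/esym; apply: contraNF DnM => /eqP ->; apply: Mblock_Mfam.
Qed.

Lemma sum_z_Mblock_ge0 : 0 <= Z.
Proof.
by apply: sumr_ge0 => C /andP[CT CD]; apply: z_ge0 => //; apply: Mblock_Mfam.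
Qed.

Lemma sum_z_Mblock_le_agg_flow : Z <= \sum_(j | a j && (k \in agg j)) f j (agg j).
Proof.
rewrite (partition_big (fun j => agg j) (fun C => (C \in Tside) && (k \in C))) /=;
  last by move=> j /andP[aj kj]; rewrite kj agg_Tside //; apply/set0Pn; exists k.
rewrite (eq_bigl (fun C => (C \in Tside) && (k \in C))) => [|C]; last first.
  by case CT: (C \in Tside); rewrite //= meet_Tside_Mblock.
apply: ler_sum => C /andP[CT kC].
rewrite (eq_big (fun j => a j && (agg j == C)) (fun j => f j C))
  => [|j|j /andP[_ /eqP ->]] //; first exact: z_Mblock_le_flow.
by case: eqP => [->|]; rewrite ?andbF ?kC ?andbT.
Qed.

Lemma agg_set1_flow_le_sum_z_Mblock :
  \sum_(j | a j && (agg j == [set k])) f j (agg j) <= Z.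
Proof.
rewrite (eq_bigr (fun j => f j [set k])) => [|j /andP[_ /eqP ->]] //.
have [kT|kNT] := boolP ([set k] \in Tside); last first.
  rewrite big_pred0 ?sum_z_Mblock_ge0 // => j; apply: contraNF kNT => /andP[aj /eqP eK].
  by rewrite -eK agg_Tside // eK; apply/set0Pn; exists k; rewrite set11.
rewrite flow_set1_eq_z_Mblock // (bigD1 [set k]) /=; last first.
  by rewrite kT meet_Tside_Mblock ?set11.
rewrite lerDl sumr_ge0 // => C /andP[/andP[CT CD] _].
by apply: z_ge0 => //; apply: Mblock_Mfam.
Qed.

End Redistribution.
End Side.
End Mblock.

Lemma os_dem_sign (b : bidx B) (i : N) (k : K) : k \in Kb b ->
  {in Kb b, forall k', 0 <= os i k' * dem k'}
  \/ {in Kb b, forall k', os i k' * dem k' <= 0}.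
Proof.
move=> kb; case: (orig k =P i) => ok; [left|right] => k' k'b;
  rewrite /os -(Kb_common_origin kb k'b).
  by rewrite ok eqxx mulr_ge0 ?dem_ge0 // subr_ge0 lern1 leq_b1.
by rewrite (introF eqP ok) sub0r mulNr oppr_le0 mulr_ge0 ?dem_ge0 ?ler0n.
Qed.

Variable x : N -> N -> {set K} -> R.

Definition PAe_node_feas (b : bidx B) (i : N)
    (zi zo : {set K} -> {set K} -> R) : Prop :=
  (forall C D, C \in Tin b i -> D \in Mfam b i -> ~~ [disjoint C & D] ->
     0 <= zi C D)
  /\ (forall D C, D \in Mfam b i -> C \in Tout b i -> ~~ [disjoint C & D] ->
     0 <= zo D C)
  /\ (forall D, D \in Mfam b i ->
       \sum_(j : N | arc i j && [exists k, (D == [set k]) && (k \in Dis b i j)])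
         x i j D
       - \sum_(j : N | arc j i && [exists k, (D == [set k]) && (k \in Dis b j i)])
         x j i D
       + \sum_(C in Tout b i | ~~ [disjoint C & D]) zo D C
       - \sum_(C in Tin b i | ~~ [disjoint C & D]) zi C D
       = \sum_(k in D) os i k * dem k)
  /\ (forall C, C \in Tin b i ->
       \sum_(D in Mfam b i | ~~ [disjoint C & D]) zi C D
       - \sum_(j : N | arc j i && (Kagg b j i == C)) x j i C = 0)
  /\ (forall C, C \in Tout b i ->
       \sum_(j : N | arc i j && (Kagg b i j == C)) x i j C
       - \sum_(D in Mfam b i | ~~ [disjoint C & D]) zo D C = 0).

(* With nothing disaggregated at i, M_b^i and the sets of T_b^i are all K_b. *)
Lemma PAe_node_feas_Lset_eq0 (y : N -> N -> R) (b : bidx B) (i : N) :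
  PA_feas B x y -> Lset b i = set0 ->
  PAe_node_feas b i (fun C _ => \sum_(j | arc j i && (Kagg b j i == C)) x j i C)
                    (fun _ C => \sum_(j | arc i j && (Kagg b i j == C)) x i j C).
Proof.
move=> [x_ge0 [_ [balance _]]] L0.
have Dis_out j : arc i j -> Dis b i j = set0.
  by move=> aij; apply/eqP; rewrite -subset0 -L0 Dis_sub_Lset_out.
have Dis_in j : arc j i -> Dis b j i = set0.
  by move=> aji; apply/eqP; rewrite -subset0 -L0 Dis_sub_Lset_in.
have agg_ge0 u v : arc u v -> Dis b u v = set0 -> 0 <= x u v (Kagg b u v).
  move=> auv D0; apply: (x_ge0 _ _ auv b); apply: Kagg_Gfam.
  by rewrite /Kagg D0 setD0 Kb_nonempty.
have M_Kb : Mfam b i = [set Kb b].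
  by rewrite /Mfam L0 imset0 set0U setD0 Kb_nonempty.
have T_Kb_meet C : C = Kb b -> ~~ [disjoint C & Kb b].
  by move=> ->; rewrite meet_self Kb_nonempty.
split=> [C D _ _ _|].
  by apply: sumr_ge0 => j /andP[aji /eqP <-]; apply: agg_ge0 (Dis_in _ aji).
split=> [D C _ _ _|].
  by apply: sumr_ge0 => j /andP[aij /eqP <-]; apply: agg_ge0 (Dis_out _ aij).
split=> [D|].
  rewrite M_Kb in_set1 => /eqP ->.
  have no_dis u v : Dis b u v = set0 ->
      [exists k, (Kb b == [set k]) && (k \in Dis b u v)] = false.
    by move=> D0; apply/negbTE/existsPn => k'; rewrite D0 in_set0 andbF.
  rewrite [\sum_(j | arc i j && _) _]big_pred0 => [|j]; last first.
    by case: (boolP (arc i j)) => //= aij; rewrite no_dis ?Dis_out.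
  rewrite [\sum_(j | arc j i && _) _]big_pred0 => [|j]; last first.
    by case: (boolP (arc j i)) => //= aji; rewrite no_dis ?Dis_in.
  rewrite (sum_Tside_flow_Lset_eq0 (x i) (@Dis_sub_Lset_out b i) L0).
  rewrite (sum_Tside_flow_Lset_eq0 (fun j => x j i) (@Dis_sub_Lset_in b i) L0).
  rewrite subrr add0r -(balance b i); congr (_ - _); apply: eq_bigr => j aj.
    by rewrite sum_Gfam_all /Kagg Dis_out // setD0 Kb_nonempty big_set0 addr0.
  by rewrite sum_Gfam_all /Kagg Dis_in // setD0 Kb_nonempty big_set0 addr0.
split=> C CT; rewrite M_Kb (big_pred1 (Kb b)) ?subrr // => D /=;
  rewrite in_set1; case: eqP => [->|] //=; apply: T_Kb_meet.
  exact: Tside_Lset_eq0 (@Dis_sub_Lset_in b i) L0 _ CT.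
exact: Tside_Lset_eq0 (@Dis_sub_Lset_out b i) L0 _ CT.
Qed.

End Aggregation.

Section PAeToPAi.
Variables (R : realDomainType) (I : mcnd R) (B : partial_aggregation I).
Variable x : node I -> node I -> {set comm I} -> R.

Lemma PAi_ineqs_of_PAe_node (b : bidx B) (i : node I) zi zo k :
  PAe_node_feas x b i zi zo -> k \in Kb b ->
  os i k * dem k <= \sum_(j | arc i j) \sum_(D in Gfam b i j | k \in D) x i j D
                    - \sum_(j | arc j i) \sum_(D in Gfam b j i | D == [set k]) x j i D
  /\ \sum_(j | arc i j) \sum_(D in Gfam b i j | D == [set k]) x i j D
     - \sum_(j | arc j i) \sum_(D in Gfam b j i | k \in D) x j i D <= os i k * dem k.
Proof.
move=> [zi_ge0 [zo_ge0 [M_balance [Tin_balance Tout_balance]]]] kb.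
have out_sub := @Dis_sub_Lset_out _ _ B b i.
have in_sub := @Dis_sub_Lset_in _ _ B b i.
have out_flow C : C \in Tout b i -> \sum_(j | arc i j && (Kagg b i j == C)) x i j C
    = \sum_(D in Mfam b i | ~~ [disjoint C & D]) zo D C.
  by move=> CT; apply/eqP; rewrite -subr_eq0 Tout_balance.
have in_flow C : C \in Tin b i -> \sum_(j | arc j i && (Kagg b j i == C)) x j i C
    = \sum_(D in Mfam b i | ~~ [disjoint C & D]) zi C D.
  by move=> CT; apply/esym/eqP; rewrite -subr_eq0 Tin_balance.
have zi_ge0' D C :
    D \in Mfam b i -> C \in Tin b i -> ~~ [disjoint C & D] -> 0 <= zi C D.
  by move=> DM CT; apply: zi_ge0.
have := M_balance _ (Mblock_Mfam i kb).
rewrite (sum_dis_Mblock k (x i) out_sub).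
rewrite (sum_dis_Mblock k (fun j => x j i) in_sub) => balance.
rewrite (eq_bigr _ (fun j _ => sum_Gfam_mem b i j (x i j) k)).
rewrite (eq_bigr _ (fun j _ => sum_Gfam_set1 b j i (x j i) k)).
rewrite (eq_bigr _ (fun j _ => sum_Gfam_set1 b i j (x i j) k)).
rewrite (eq_bigr _ (fun j _ => sum_Gfam_mem b j i (x j i) k)).
rewrite !big_split -!big_mkcondr /=.
apply: (node_balance_bounds _ balance).
- apply: sum_same_sign_between (mem_Mblock i kb) _.
  by case: (os_dem_sign i kb) => sgn; [left|right];
    apply: sub_in1 sgn => u; apply: (subsetP (Mblock_sub i kb)).
- have [eM|neM] := eqVneq (Mblock b i k) [set k].
    by left; rewrite eM big_set1.
  have [dout0 sout0] := Mblock_neq_set1_flows_eq0 kb (x i) out_sub neM.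
  have [din0 sin0] := Mblock_neq_set1_flows_eq0 kb (fun j => x j i) in_sub neM.
  by right; split.
- exact: (sum_z_Mblock_ge0 kb zo_ge0).
- exact: (sum_z_Mblock_ge0 kb zi_ge0').
- exact: (sum_z_Mblock_le_agg_flow kb out_sub out_flow zo_ge0).
- exact: (sum_z_Mblock_le_agg_flow kb in_sub in_flow zi_ge0').
- exact: (agg_set1_flow_le_sum_z_Mblock kb out_sub out_flow zo_ge0).
- exact: (agg_set1_flow_le_sum_z_Mblock kb in_sub in_flow zi_ge0').
Qed.

Lemma PAe_feas_PAi_feas (y : node I -> node I -> R)
    (zin zout : bidx B -> node I -> {set comm I} -> {set comm I} -> R) :
  PAe_feas x y zin zout -> PAi_feas B x y.
Proof.
move=> [PA PAe_nodes]; split=> //.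
have node_feas (b : bidx B) (i : node I) : exists zi zo, PAe_node_feas x b i zi zo.
  have [L0|L_ne0] := eqVneq (Lset b i) set0.
    by do 2 eexists; exact: PAe_node_feas_Lset_eq0 PA L0.
  by exists (zin b i), (zout b i); exact: PAe_nodes.
split=> b k kb i; have [zi [zo feas]] := node_feas b i.
  by case: (PAi_ineqs_of_PAe_node feas kb).
by case: (PAi_ineqs_of_PAe_node feas kb).
Qed.

End PAeToPAi.

Section Counterexample.
Variable R : numDomainType.
Local Notation K2 := (bool * bool)%type.

Definition two_node_instance : mcnd R :=
  @Mcnd R bool K2 (fun u v => u != v) (fun _ => false) (fun _ => false)
    (fun _ => 1) (fun _ _ => 1) (fun _ _ => 0) (fun _ _ => 0)
    (fun _ => ler01) (fun _ _ _ => ler01) (fun _ _ _ => lexx 0) (fun _ _ _ => lexx 0).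

Lemma setT_pair_neq0 : [set: K2] != set0.
Proof. by apply/set0Pn; exists (true, true). Qed.

Lemma setT_partition (k : K2) : exists! b : unit, k \in [set: K2].
Proof. by exists tt; split=> [|[]]; rewrite ?inE. Qed.

Definition two_node_aggregation : partial_aggregation two_node_instance :=
  @PAgg R two_node_instance unit (fun _ => [set: K2])
    (fun _ u _ => [set k | k.1 == u])
    (fun _ => setT_pair_neq0) (fun _ _ _ _ _ => erefl) (fun _ _ _ => subsetT _)
    setT_partition.

Local Notation B2 := two_node_aggregation.

Definition agg_from (u : bool) : {set K2} := [set k | k.1 != u].

Definition circulation (u v : bool) (D : {set K2}) : R := (D == agg_from u)%:R.

Lemma Kagg_two_node (b : bidx B2) u v : Kagg b u v = agg_from u.
Proof. by apply/setP => k; rewrite !inE andbT. Qed.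

Lemma agg_from_neq0 u : agg_from u != set0.
Proof. by apply/set0Pn; exists (~~ u, true); rewrite inE /=; case: u. Qed.

Lemma agg_from_neq_set1 u k : (agg_from u == [set k]) = false.
Proof.
apply/negbTE/eqP => /setP eA; move: (eA (~~ u, true)) (eA (~~ u, false)).
by rewrite !inE; clear eA; case: u; case: k => [[] []].
Qed.

Lemma circulation_set1 u v k : circulation u v [set k] = 0.
Proof. by rewrite /circulation eq_sym agg_from_neq_set1. Qed.

Lemma os_two_node u k : os (I := two_node_instance) u k = 0.
Proof. by rewrite /os subrr. Qed.

Lemma sum_Gfam_circulation (b : bidx B2) u v :
  \sum_(D in Gfam b u v) circulation u v D = 1.
Proof.
rewrite sum_Gfam_all Kagg_two_node agg_from_neq0 /circulation eqxx big1 ?addr0 //.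
by move=> k _; rewrite eq_sym agg_from_neq_set1.
Qed.

Lemma circulation_PAi_feas : PAi_feas B2 circulation (fun _ _ => 1).
Proof.
have circ_ge0 u v D : 0 <= circulation u v D by apply: ler0n.
split; [split; [|split; [|split; [|split]]]|split].
- by move=> *; apply: circ_ge0.
- by move=> *; rewrite lexx ler01.
- move=> b u; under eq_bigr do rewrite sum_Gfam_circulation.
  under [X in _ - X]eq_bigr do rewrite sum_Gfam_circulation.
  rewrite [X in _ - X](eq_bigl (fun v => u != v)) => [|v]; last by rewrite /= eq_sym.
  by rewrite subrr big1 // => k _; rewrite os_two_node mul0r.
- move=> u v _; under eq_bigr do rewrite sum_Gfam_circulation.
  by rewrite (big_pred1 tt) ?mulr1 // => -[].
- move=> u v _ b D _; rewrite mulr1 sumr_const ler_nat /circulation.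
  by case: eqP => [->|_] //; rewrite card_gt0 agg_from_neq0.
- move=> b k _ u; rewrite os_two_node mul0r [X in _ - X]big1 ?subr0.
    by apply: sumr_ge0 => v _; apply: sumr_ge0 => D _; apply: circ_ge0.
  by move=> v _; apply: big1 => D /andP[_ /eqP ->]; apply: circulation_set1.
- move=> b k _ u; rewrite os_two_node mul0r big1 ?sub0r.
    rewrite oppr_le0; apply: sumr_ge0 => v _.
    by apply: sumr_ge0 => D _; apply: circ_ge0.
  by move=> v _; apply: big1 => D /andP[_ /eqP ->]; apply: circulation_set1.
Qed.

Local Notation b0 := (tt : bidx B2).

Lemma Lset_two_node_true : Lset b0 true = setT.
Proof.
apply/setP => -[u c]; rewrite !inE /=; apply/orP.
by case: u; [right|left]; apply/existsP; exists false; rewrite !inE.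
Qed.

(* At node [true] every commodity is disaggregated on an incident arc, so the
   aggregated inflow {k | k.1} must be split into singletons {k}; such a {k}
   meets no outgoing aggregated set and carries no disaggregated flow, hence it
   can receive nothing. *)
Lemma circulation_not_PAe_node_feas (zi zo : {set K2} -> {set K2} -> R) :
  ~ PAe_node_feas (I := two_node_instance) circulation b0 true zi zo.
Proof.
move=> [_ [_ [M_balance [Tin_balance _]]]].
set C := agg_from false.
have CT : C \in Tin b0 true.
  by apply/imsetP; exists false; rewrite ?inE ?Kagg_two_node ?agg_from_neq0.
have Tin_C C' : C' \in Tin b0 true -> C' = C.
  by case/imsetP => -[]; rewrite inE => /andP[] // _ _ ->; rewrite Kagg_two_node.
have Tout_true C' : C' \in Tout b0 true -> C' = agg_from true.
  by case/imsetP => j _ ->; rewrite Kagg_two_node.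
have M_set1 D : D \in Mfam b0 true -> exists k, D = [set k].
  rewrite /Mfam Lset_two_node_true setDv eqxx /= setU0 => /imsetP[k _ ->].
  by exists k.
have zi0 D : D \in Mfam b0 true -> ~~ [disjoint C & D] -> zi C D = 0.
  move=> DM; have [k eD] := M_set1 D DM; subst D; rewrite meet_set1 => kC.
  have := M_balance _ DM; rewrite big_set1 os_two_node mul0r.
  rewrite [X in _ - X = _ -> _](big_pred1 C) => [|C']; last first.
    rewrite meet_set1; apply/andP/eqP => [[C'T _]|->]; [exact: Tin_C | by split].
  rewrite [X in _ + X - _]big1 => [|C' /andP[/Tout_true ->]]; last first.
    by rewrite meet_set1 !inE; move: kC; rewrite inE; case: k.1.
  rewrite !big1 => [|j _|j _]; try exact: circulation_set1.
  by rewrite subrr add0r sub0r => /eqP; rewrite oppr_eq0 => /eqP.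
have := Tin_balance C CT.
rewrite big1 => [|D /andP[DM CD]]; last exact: zi0.
rewrite (big_pred1 false) => [|j]; last first.
  by case: j => /=; rewrite ?Kagg_two_node ?eqxx.
by rewrite /circulation eqxx sub0r => /eqP; rewrite oppr_eq0 oner_eq0.
Qed.

Lemma circulation_not_PAe_feas :
  ~ exists zin zout, PAe_feas (B := B2) circulation (fun _ _ => 1) zin zout.
Proof.
move=> [zin [zout [_ PAe_nodes]]].
have L_ne0 : Lset b0 true != set0 by rewrite Lset_two_node_true setT_pair_neq0.
exact: circulation_not_PAe_node_feas (PAe_nodes b0 true L_ne0).
Qed.

End Counterexample.

Theorem theorem2 (R : realType) :
  (forall (I : mcnd R) (B : partial_aggregation I)
          (x : node I -> node I -> {set comm I} -> R) (y : node I -> node I -> R)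
          (zin zout : bidx B -> node I -> {set comm I} -> {set comm I} -> R),
     PAe_feas x y zin zout ->
     PAi_feas B x y /\ PAe_obj x y zin zout = PAi_obj B x y)
  /\
  (exists (I : mcnd R) (B : partial_aggregation I)
          (x : node I -> node I -> {set comm I} -> R) (y : node I -> node I -> R),
     PAi_feas B x y /\
     ~ (exists zin zout : bidx B -> node I -> {set comm I} -> {set comm I} -> R,
          PAe_feas x y zin zout)).
Proof.
split=> [I B x y zin zout PAe | ].
  by split; first exact: PAe_feas_PAi_feas PAe.
exists (two_node_instance R), (two_node_aggregation R), (@circulation R).
exists (fun _ _ => 1).
by split; [exact: circulation_PAi_feas | exact: circulation_not_PAe_feas].
Qed.
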